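(* Let $P_1,P_2\in\hat E_n$ both satisfy condition $A_1$. Then $P_1P_2$ satisfies condition $A_1$ and $\mathrm{ord}_\Gamma(P_1P_2)=\mathrm{ord}_\Gamma(P_1)+\mathrm{ord}_\Gamma(P_2)$.
   Context: Let $K$ be a field of characteristic $0$, $n\ge1$, $m\ge0$, $K_y:=K[[y_1,\dots,y_m]]$ ($K_y=K$ if $m=0$), $\hat R_y:=K_y[[x_1,\dots,x_n]]$ with maximal ideal $\mathfrak m=(y_1,\dots,y_m,x_1,\dots,x_n)$ and $\mathfrak m$-adic order $\upsilon$. Multi-index notation $\underline\partial^{\underline k}=\partial_1^{k_1}\cdots\partial_n^{k_n}$, $|\underline k|=\sum k_j$. For a formal series $P=\sum_{\underline k}a_{\underline k}\underline\partial^{\underline k}$ ($a_{\underline k}\in\hat R_y$) put $\mathbf{ord}(P)=\sup_{\underline k}(|\underline k|-\upsilon(a_{\underline k}))$, $\mathbf{ord}(0)=-\infty$; $\hat D_n^{sym}$ is the ring of such series with $\mathbf{ord}<\infty$ (multiplication by the Leibniz rule, $\partial_i=\partial/\partial x_i$, $y_j$ central), extending the ring of differential operators $D_n=\hat R_y[\partial_1,\dots,\partial_n]$. Let $\hat D_n^n\subset\hat D_n^{sym}$ be the subring of operators not involving $\partial_n$, and $\hat E_n:=\hat D_n^n((\partial_n^{-1}))$ the ring of series $\sum_{s\le l}p_s\partial_n^s$ ($p_s\in\hat D_n^n$) with multiplication given by $\partial_n^s a=\sum_{j\ge0}\binom{s}{j}\partial_n^j(a)\partial_n^{s-j}$; $\mathbf{ord}$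 is defined on $\hat E_n$ by the same formula (now $k_n\in\mathbb Z$). $\Gamma$-order: for $1\le i\le n$ let $\hat D^{(i)}$ be the elements of $\hat D_n^{sym}$ not involving $\partial_{i+1},\dots,\partial_n$, and $\hat D^{(0)}=\hat R_y$; nonzero elements of $\hat D^{(0)}$ have empty $\Gamma$-order and are their own highest coefficient. A nonzero $P\in\hat D^{(i)}$ ($1\le i\le n-1$) has $\Gamma$-order $(k_1,\dots,k_i)$ if $P=\sum_{s=0}^{k_i}p_s\partial_i^s$ is a polynomial in $\partial_i$ with $p_s\in\hat D^{(i-1)}$, $p_{k_i}\neq0$, and $p_{k_i}$ has $\Gamma$-order $(k_1,\dots,k_{i-1})$; its highest coefficient is that of $p_{k_i}$. An element $P=\sum_{s\le k_n}p_s\partial_n^s\in\hat E_n$ with $p_{k_n}\ne0$ has $\mathrm{ord}_\Gamma(P)=(k_1,\dots,k_n)$ if $p_{k_n}$ has $\Gamma$-order $(k_1,\dots,k_{n-1})$; its highest coefficient is that of $p_{k_n}$, and $P$ is monic if this is $1$. ($\mathrm{ord}_\Gamma$ is only defined on some elements.) $|\mathrm{ord}_\Gamma(P)|:=k_1+\dots+k_n$. $P$ satisfies condition $A_1$ if $\mathrm{ord}_\Gamma(P)$ is defined and $\mathbf{ord}(P)\le|\mathrm{ord}_\Gamma(P)|$. *)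

From HB Require Import structures.
From mathcomp Require Import all_boot all_order all_algebra.
From mathcomp Require Import boolp classical_sets fsbigop.
Set Implicit Arguments. Unset Strict Implicit. Unset Printing Implicit Defensive.
Import Order.TTheory GRing.Theory Num.Theory.
Local Open Scope ring_scope.

Definition mon (p : nat) := {ffun 'I_p -> nat}.
(* Index k of a differential monomial d_1^k_1 ... d_n^k_n, with k_j in Z
   (only k_n may be negative for elements of E_n). *)
Definition idx (n : nat) := {ffun 'I_n -> int}.

Section Defs.
Variables (K : fieldType) (m n : nat).

(* An element of \hat R_y = K[[y_1..y_m]][[x_1..x_n]]: its coefficient
   at y^beta x^alpha. *)
Definition series := mon m -> mon n -> K.
Definition zero_series : series := fun _ _ => 0.

(* A formal operator sum_k a_k d^k, given by its coefficient family. *)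
Definition op := idx n -> series.
Definition zero_op : op := fun _ => zero_series.

Definition mdeg (p : nat) (b : mon p) : nat := \sum_(j < p) b j.
Definition tdeg (b : mon m) (a : mon n) : nat := (mdeg b + mdeg a)%N.
Definition idx_abs (k : idx n) : int := \sum_(j < n) k j.
Definition idx_add (k1 k2 : idx n) : idx n := [ffun j => k1 j + k2 j].

(* m-adic order upsilon of a nonzero series (value irrelevant for 0,
   which is only used through the nonzero case below). *)
Definition upsilon (a : series) : nat :=
  match pselect (exists d : nat, `[< exists b c, tdeg b c = d /\ a b c != 0 >]) with
  | left h => ex_minn h
  | right _ => 0%N
  end.

(* ord(P) <= N, where ord(P) = sup_k (|k| - upsilon(a_k)), with
   zero coefficients contributing -oo (so ord 0 = -oo). *)
Definition ord_le (P : op) (N : int) : Prop :=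
  forall k : idx n, P k <> zero_series -> idx_abs k - (upsilon (P k))%:Z <= N.

(* coefficient of d_t^s in Q, as an operator not involving d_t *)
Definition coef_d (Q : op) (t : 'I_n) (s : int) : op :=
  fun l : idx n => if l t == 0 then Q [ffun j => if j == t then s else l j]
           else zero_series.

(* Membership in \hat E_n = \hat D_n^n((d_n^{-1})):
   - exponents of d_1..d_{n-1} are nonnegative,
   - exponents of d_n are bounded above,
   - every coefficient p_s of d_n^s lies in \hat D_n^n (finite ord). *)
Definition inE (P : op) : Prop :=
  [/\ forall (l : idx n) (t : 'I_n), (t < n.-1)%N -> l t < 0 -> P l = zero_series,
      exists L : int, forall (l : idx n) (t : 'I_n), val t = n.-1 -> L < l t ->
                         P l = zero_series
    & forall (t : 'I_n), val t = n.-1 -> forall s : int,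
          exists N : int, ord_le (coef_d P t s) N].

(* Gamma-order, by recursion on the level i: Q in D^{(i)} has Gamma-order
   (k_1..k_i) if all coefficients of d_i^s with s > k_i vanish and the
   coefficient of d_i^{k_i} has Gamma-order (k_1..k_{i-1});
   at level 0 the element must be nonzero. *)
Fixpoint hasOrdG (i : nat) (Q : op) (k : idx n) : Prop :=
  match i with
  | 0 => Q <> zero_op
  | i'.+1 => forall t : 'I_n, val t = i' ->
       (forall s : int, k t < s -> coef_d Q t s = zero_op) /\
       hasOrdG i' (coef_d Q t (k t)) k
  end.

Definition ordG (P : op) (k : idx n) : Prop := inE P /\ hasOrdG n P k.

Definition A1 (P : op) : Prop := exists k, ordG P k /\ ord_le P (idx_abs k).

Definition gbinom (s : int) (i : nat) : K :=
  (\prod_(t < i) ((s - t%:Z)%:~R : K)) / (i`!)%:R.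

Definition index4 : choiceType :=
  (idx n * {ffun 'I_n -> nat} * mon m * mon n)%type.

(* Product in \hat E_n:
   (sum_k a_k d^k)(sum_l b_l d^l) = sum_{k,l,i} a_k prod_j binom(k_j,i_j) d^i(b_l) d^{k-i+l}.
   Coefficient at d^r y^beta x^alpha; d^i(b) has coefficient
   b(beta2, alpha2+i) * prod_j (alpha2_j+i_j)^_(i_j) at y^beta2 x^alpha2.
   The sum has finite support for P, Q in \hat E_n. *)
Definition mulE (P Q : op) : op := fun r b a =>
  \sum_(u \in [set: index4]%classic)
    (let: (k, i, b1, a1) := u in
     if [forall j, (b1 j <= b j)%N] && [forall j, (a1 j <= a j)%N] then
       P k b1 a1 * (\prod_(j < n) gbinom (k j) (i j)) *
       Q [ffun j => r j - k j + (i j)%:Z]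
         [ffun j => (b j - b1 j)%N] [ffun j => (a j - a1 j + i j)%N] *
       \prod_(j < n) (((a j - a1 j + i j) ^_ (i j))%N)%:R
     else 0).

End Defs.

From Pilot Require Import Defs.
From HB Require Import structures.
From mathcomp Require Import all_boot all_order all_algebra zify.
From mathcomp Require Import boolp classical_sets functions fsbigop.
Set Implicit Arguments. Unset Strict Implicit. Unset Printing Implicit Defensive.
Import Order.TTheory GRing.Theory Num.Theory.
Local Open Scope classical_set_scope.
Local Open Scope ring_scope.

(* A coefficient of P*Q in \hat E_n is a finitely supported sum of terms
     P_k * prod_j binom(k_j, i_j) * (d^i Q_l)   with r = k - i + l
   (mul_term below).  The theorem follows from three facts:
   1. ord is subadditive (ord_mulE): a nonzero term comes from nonzero P_k
      and Q_l; |k - i + l| = |k| + |l| - |i|, while taking d^i lowers the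
      m-adic order of Q_l by at most |i|.
   2. P*Q lies in \hat E_n (inE_mulE): the exponents of d_1..d_(n-1) stay
      nonnegative since binom(k_j, i_j) = 0 for 0 <= k_j < i_j, those of d_n
      stay bounded above, and coefficients have finite ord by 1.
   3. Gamma-orders add (hasOrdG_mulE), by induction on the level i: the
      coefficient of the top power d_i^(a+b) of P*Q is the product of the top
      coefficients of P and Q (coef_top_mulE, a reindexing of the sum), and at
      level 0 a product of nonzero power series is nonzero, as seen on the sum
      of the lexicographically least monomials of the factors (mulE_neq0).
   Generic facts on finite sums, monomials and the lexicographic order come
   first. *)

Section FiniteSums.
Variables (R : nmodType) (I : choiceType).

Lemma fsbig_neq0_witness (F : I -> R) :
  \sum_(u \in [set: I]) F u != 0 -> exists u, F u != 0.
Proof.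
move=> Hsum; apply/not_existsP => Hzero; move/eqP: Hsum; apply.
by apply: fsbig1 => u _; apply/eqP/negPn/negP => Hu; apply: (Hzero u).
Qed.

Lemma fsbig_single (F : I -> R) (u0 : I) :
  (forall u, u <> u0 -> F u = 0) -> \sum_(u \in [set: I]) F u = F u0.
Proof.
move=> H; rewrite -(fsbig_widen [set u0]) ?fsbig_set1 //.
by move=> u [_ /= Hu]; apply: H.
Qed.

Lemma fsbig_reindex (D : set I) (h : I -> I) (F G : I -> R) :
  set_inj D h -> (forall u, ~ D u -> F u = 0) ->
  (forall v, ~ (h @` D) v -> G v = 0) -> (forall u, D u -> F u = G (h u)) ->
  \sum_(u \in [set: I]) F u = \sum_(u \in [set: I]) G u.
Proof.
move=> hinj HF HG HFG.
rewrite -(fsbig_widen D) //; last by move=> u [_ Hu]; apply: HF.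
rewrite -[RHS](fsbig_widen (h @` D)) //; last by move=> u [_ Hu]; apply: HG.
by rewrite fsbig_image //; apply: eq_fsbigr => u; rewrite inE; apply: HFG.
Qed.

End FiniteSums.

Lemma ffun_neq_const (p : nat) (T : eqType) (f : {ffun 'I_p -> T}) (x : T) :
  f != [ffun=> x] -> exists j, f j != x.
Proof.
move=> Hf; apply/not_existsP => Hx; move/eqP: Hf; apply; apply/ffunP => j.
by rewrite ffunE; apply/eqP/negPn/negP => Hj; apply: (Hx j).
Qed.

Lemma mdeg_subD p (a a1 i : mon p) : [forall j, (a1 j <= a j)%N] ->
  (mdeg [ffun j => (a j - a1 j + i j)%N] + mdeg a1 = mdeg a + mdeg i)%N.
Proof.
move=> /forallP H; rewrite /mdeg -!big_split /=; apply: eq_bigr => j _.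
by rewrite ffunE -addnA [(i j + _)%N]addnC addnA subnK.
Qed.

Lemma mdeg_sub p (b b1 : mon p) : [forall j, (b1 j <= b j)%N] ->
  (mdeg [ffun j => (b j - b1 j)%N] + mdeg b1 = mdeg b)%N.
Proof.
move=> Hb; have := mdeg_subD [ffun=> 0%N] Hb.
have -> : mdeg ([ffun=> 0%N] : mon p) = 0%N by rewrite /mdeg big1 // => j; rewrite ffunE.
by rewrite addn0 => <-; congr (mdeg _ + _)%N; apply/ffunP => j; rewrite !ffunE addn0.
Qed.

Lemma gbinom0 (K : fieldType) (s : int) : gbinom K s 0 = 1.
Proof. by rewrite /gbinom big_ord0 fact0 divr1. Qed.

Lemma gbinom_eq0 (K : fieldType) (s : int) (i : nat) :
  0 <= s -> s < i%:Z -> gbinom K s i = 0.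
Proof.
case: s => [s _|//]; rewrite ltz_nat => hs.
by rewrite /gbinom (bigD1 (Ordinal hs)) //= subrr !mul0r.
Qed.

Definition lexle p (u v : mon p) :=
  forall j : 'I_p, (forall i : 'I_p, (i < j)%N -> u i = v i) -> (u j <= v j)%N.

Lemma lex_cancel p (u v u' v' : mon p) : lexle u u' -> lexle v v' ->
  (forall j, u j + v j = u' j + v' j)%N -> u = u' /\ v = v'.
Proof.
move=> Hu Hv Hs.
suff H : forall J (j : 'I_p), (j < J)%N -> u j = u' j /\ v j = v' j.
  by split; apply/ffunP => j; have [] := H j.+1 j (ltnSn _).
elim=> [//|J IH] j; rewrite ltnS leq_eqVlt => /orP [/eqP Ej|Hj]; last exact: IH.
have Hpre (i : 'I_p) : (i < j)%N -> u i = u' i /\ v i = v' i.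
  by move=> Hi; apply: IH; rewrite -Ej.
have h1 := Hu j (fun i Hi => (Hpre i Hi).1).
have h2 := Hv j (fun i Hi => (Hpre i Hi).2).
have h3 := Hs j; split; lia.
Qed.

(* Every nonempty set of monomials has a lexicographically least element;
   it is built coordinate by coordinate, minimizing the J-th exponent among
   the elements agreeing with the current candidate before J. *)
Lemma lex_min p (S : mon p -> Prop) : (exists u, S u) ->
  exists u, S u /\ forall v, S v -> lexle u v.
Proof.
move=> Hne.
suff H J : exists u, S u /\ forall v, S v -> forall j : 'I_p, (j < J)%N ->
    (forall i : 'I_p, (i < j)%N -> u i = v i) -> (u j <= v j)%N.
  have [u [Su Hu]] := H p; exists u; split => // v Sv j; exact: Hu v Sv j (ltn_ord j).
elim: J => [|J [u [Su Hu]]]; first by case: Hne => u Su; exists u.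
have [HJ|HJ] := ltnP J p; last first.
  by exists u; split => // v Sv j Hj; apply: Hu => //; apply: leq_trans (ltn_ord j) HJ.
pose T x := exists v, S v /\ (forall i : 'I_p, (i < J)%N -> v i = u i) /\
                      v (Ordinal HJ) = x.
have Tex : exists x, `[< T x >] by exists (u (Ordinal HJ)); apply/asboolP; exists u.
case: (ex_minnP Tex) => x0 /asboolP [v0 [Sv0 [Hv0 Ev0]]] Hmin.
exists v0; split => // v Sv j; rewrite ltnS leq_eqVlt => /orP [/eqP Ej|Hj] Hpre.
- have -> : j = Ordinal HJ by apply: val_inj.
  rewrite Ev0; apply: Hmin; apply/asboolP; exists v; split => //; split => // i Hi.
  by rewrite -Hpre ?Ej // Hv0.
- rewrite Hv0 //; apply: (Hu v Sv j Hj) => i Hi.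
  by rewrite -Hv0 ?(ltn_trans Hi Hj) //; exact: Hpre.
Qed.

Lemma lex2_min p q (S : mon p -> mon q -> Prop) : (exists b a, S b a) ->
  exists b a, S b a /\
    forall b' a', S b' a' -> lexle b b' /\ (b = b' -> lexle a a').
Proof.
move=> [b0 [a0 H0]].
have [b [[a Sba] Hb]] :=
  lex_min (ex_intro (fun b => exists a, S b a) b0 (ex_intro _ a0 H0)).
have [a' [Sa Ha]] := lex_min (ex_intro (S b) a Sba).
exists b, a'; split => // b' a'' S'; split; first by apply: Hb; exists a''.
by move=> E; subst b'; apply: Ha.
Qed.

Section Product.
Variables (K : fieldType) (m n : nat).

Local Notation zeroS := (@zero_series K m n).
Local Notation zeroO := (@zero_op K m n).

Lemma upsilon_le (P : series K m n) b a : P b a != 0 -> (upsilon P <= tdeg b a)%N.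
Proof.
move=> Hne; rewrite /upsilon; case: pselect => [h|h].
  by case: ex_minnP => d Hd; apply; apply/asboolP; exists b, a.
by exfalso; apply: h; exists (tdeg b a); apply/asboolP; exists b, a.
Qed.

Lemma upsilon_attained (P : series K m n) : P <> zeroS ->
  exists b a, P b a != 0 /\ tdeg b a = upsilon P.
Proof.
move=> Hne; rewrite /upsilon; case: pselect => [h|h].
  by case: ex_minnP => d /asboolP [b [a [Hd Hb]]] _; exists b, a.
exfalso; apply: Hne; apply/functional_extensionality_dep => b.
apply/functional_extensionality_dep => a; apply/eqP/negPn/negP => Hb.
by apply: h; exists (tdeg b a); apply/asboolP; exists b, a.
Qed.

(* In the coefficient of d^r of P*Q, the term pairing P_k with the i-th
   derivative of Q_l requires r = k - i + l, i.e. l = shift r k i. *)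
Definition shift (r k : idx n) (i : mon n) : idx n :=
  [ffun j => r j - k j + (i j)%:Z].

Lemma idx_abs_shift (r k : idx n) (i : mon n) :
  idx_abs (shift r k i) = idx_abs r - idx_abs k + (mdeg i)%:Z.
Proof.
rewrite /idx_abs /mdeg -natz natr_sum -sumrB -big_split /=.
by apply: eq_bigr => j _; rewrite ffunE natz.
Qed.

Lemma idx_abs_add (k1 k2 : idx n) :
  idx_abs (idx_add k1 k2) = idx_abs k1 + idx_abs k2.
Proof. by rewrite /idx_abs -big_split; apply: eq_bigr => j _; rewrite ffunE. Qed.

Definition mul_term (P Q : op K m n) (r : idx n) (b : mon m) (a : mon n)
    (u : index4 m n) : K :=
  let: (k, i, b1, a1) := u in
  if [forall j, (b1 j <= b j)%N] && [forall j, (a1 j <= a j)%N] then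
    P k b1 a1 * (\prod_(j < n) gbinom K (k j) (i j)) *
    Q (shift r k i) [ffun j => (b j - b1 j)%N] [ffun j => (a j - a1 j + i j)%N] *
    \prod_(j < n) (((a j - a1 j + i j) ^_ (i j))%N)%:R
  else 0.

Lemma mulEE (P Q : op K m n) r b a :
  mulE P Q r b a = \sum_(u \in [set: index4 m n]) mul_term P Q r b a u.
Proof. by []. Qed.

Lemma mulE_eq0 (P Q : op K m n) r :
  (forall b a (k : idx n) (i : mon n) (b1 : mon m) (a1 : mon n),
     mul_term P Q r b a (k, i, b1, a1) = 0) ->
  mulE P Q r = zeroS.
Proof.
move=> H; apply/functional_extensionality_dep => b.
apply/functional_extensionality_dep => a.
by rewrite mulEE; apply: fsbig1 => -[[[k i] b1] a1] _; apply: H.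
Qed.

Lemma mul_termP0 (P Q : op K m n) r b a
    (k : idx n) (i : mon n) (b1 : mon m) (a1 : mon n) :
  P k = zeroS -> mul_term P Q r b a (k, i, b1, a1) = 0.
Proof. by move=> /= ->; case: ifP; rewrite ?mul0r. Qed.

Lemma mul_termQ0 (P Q : op K m n) r b a
    (k : idx n) (i : mon n) (b1 : mon m) (a1 : mon n) :
  Q (shift r k i) = zeroS -> mul_term P Q r b a (k, i, b1, a1) = 0.
Proof. by move=> /= ->; case: ifP; rewrite ?mulr0 ?mul0r. Qed.

Lemma mul_term_binom0 t (P Q : op K m n) r b a
    (k : idx n) (i : mon n) (b1 : mon m) (a1 : mon n) :
  0 <= k t -> k t < (i t)%:Z -> mul_term P Q r b a (k, i, b1, a1) = 0.
Proof.
move=> hk hi /=; case: ifP => // _.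
by rewrite (bigD1 t) //= gbinom_eq0 // mul0r mulr0 !mul0r.
Qed.

Lemma mul_term_neq0 (P Q : op K m n) r b a
    (k : idx n) (i : mon n) (b1 : mon m) (a1 : mon n) :
  mul_term P Q r b a (k, i, b1, a1) != 0 ->
  [/\ [forall j, (b1 j <= b j)%N], [forall j, (a1 j <= a j)%N], P k b1 a1 != 0
    & Q (shift r k i) [ffun j => (b j - b1 j)%N]
        [ffun j => (a j - a1 j + i j)%N] != 0].
Proof.
rewrite /=; case: ifP => [/andP [Hb Ha]|]; last by rewrite eqxx.
by rewrite !mulf_eq0 !negb_or => /andP [/andP [/andP [HP _] HQ] _].
Qed.

Lemma ord_mulE (P Q : op K m n) N1 N2 : ord_le P N1 -> ord_le Q N2 ->
  ord_le (mulE P Q) (N1 + N2).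
Proof.
move=> HP HQ r Hr.
have [b [a [Hba <-]]] := upsilon_attained Hr.
have [[[[k i] b1] a1] /mul_term_neq0 [Hb Ha HPk HQl]] := fsbig_neq0_witness Hba.
have hP : idx_abs k - (upsilon (P k))%:Z <= N1.
  by apply: HP => E; move: HPk; rewrite E eqxx.
have hQ : idx_abs (shift r k i) - (upsilon (Q (shift r k i)))%:Z <= N2.
  by apply: HQ => E; move: HQl; rewrite E eqxx.
have uP := upsilon_le HPk; have uQ := upsilon_le HQl.
move: hQ uP uQ; rewrite idx_abs_shift /tdeg.
have eb := mdeg_sub Hb; have ea := mdeg_subD i Ha.
lia.
Qed.

Definition upd (l : idx n) (t : 'I_n) (s : int) : idx n :=
  [ffun j => if j == t then s else l j].

Lemma upd_same (l : idx n) t s : upd l t s t = s.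
Proof. by rewrite ffunE eqxx. Qed.

Lemma upd_id (l : idx n) t : upd l t (l t) = l.
Proof. by apply/ffunP => j; rewrite ffunE; case: eqP => [->|]. Qed.

Lemma upd_upd (l : idx n) t s s' : upd (upd l t s) t s' = upd l t s'.
Proof. by apply/ffunP => j; rewrite !ffunE; case: eqP. Qed.

Lemma upd_inj (l l' : idx n) t s : l t = l' t -> upd l t s = upd l' t s -> l = l'.
Proof.
move=> E1 /ffunP E2; apply/ffunP => j; have := E2 j; rewrite !ffunE.
by case: eqP => [->|].
Qed.

Lemma idx_abs_upd (l : idx n) t s : idx_abs (upd l t s) = idx_abs l - l t + s.
Proof.
rewrite /idx_abs (bigD1 t) //= [in RHS](bigD1 t) //= upd_same.
rewrite (eq_bigr (fun j => l j)); last by move=> j /negbTE Hj; rewrite ffunE Hj.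
by rewrite [l t + _]addrC addrK addrC.
Qed.

Lemma coef_d_on (Q : op K m n) t s (l : idx n) :
  l t = 0 -> coef_d Q t s l = Q (upd l t s).
Proof. by rewrite /coef_d => ->; rewrite eqxx. Qed.

Lemma coef_d_off (Q : op K m n) t s (l : idx n) :
  l t != 0 -> coef_d Q t s l = zeroS.
Proof. by rewrite /coef_d => /negbTE ->. Qed.

Lemma ord_coef_d (Q : op K m n) N t s : ord_le Q N -> ord_le (coef_d Q t s) (N - s).
Proof.
move=> HQ l; case: (eqVneq (l t) 0) => [Hl|Hl]; last by rewrite coef_d_off.
rewrite coef_d_on // => /HQ; rewrite idx_abs_upd Hl; lia.
Qed.

Lemma inE_mulE (P Q : op K m n) N1 N2 : Defs.inE P -> Defs.inE Q ->
  ord_le P N1 -> ord_le Q N2 -> Defs.inE (mulE P Q).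
Proof.
move=> [Pnn [L1 Pbd] _] [Qnn [L2 Qbd] _] HP HQ; split.
- move=> l t Ht Hl; apply: mulE_eq0 => b a k i b1 a1.
  have [Hk|Hk] := ltrP (k t) 0; first by rewrite mul_termP0 // (Pnn _ t).
  have [Hi|Hi] := ltrP (k t) (i t)%:Z; first by apply: (@mul_term_binom0 t).
  by rewrite mul_termQ0 // (Qnn _ t) // ffunE; lia.
- exists (L1 + L2) => l t Ht Hl; apply: mulE_eq0 => b a k i b1 a1.
  have [Hk|Hk] := ltrP L1 (k t); first by rewrite mul_termP0 // (Pbd _ t).
  by rewrite mul_termQ0 // (Qbd _ t) // ffunE; lia.
- move=> t Ht s; exists (N1 + N2 - s); apply: ord_coef_d; exact: ord_mulE.
Qed.

Lemma vanish_above (P : op K m n) t a :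
  (forall s, a < s -> coef_d P t s = zeroO) ->
  forall l : idx n, a < l t -> P l = zeroS.
Proof.
move=> H l Hl; have := congr1 (fun R => R (upd l t 0)) (H _ Hl).
by rewrite coef_d_on ?upd_same // upd_upd upd_id.
Qed.

Section TopCoefficient.
Variables (P Q : op K m n) (t : 'I_n) (a b : int).
Hypotheses (HP : forall l : idx n, a < l t -> P l = zeroS)
           (HQ : forall l : idx n, b < l t -> Q l = zeroS).

Lemma mulE_vanish_above s : a + b < s -> coef_d (mulE P Q) t s = zeroO.
Proof.
move=> Hs; apply/functional_extensionality_dep => l.
have [Hl|Hl] := eqVneq (l t) 0; last exact: coef_d_off.
rewrite coef_d_on //; apply: mulE_eq0 => b' a' k i b1 a1.
have [Hk|Hk] := ltrP a (k t); first by rewrite mul_termP0 // HP.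
by rewrite mul_termQ0 // HQ // ffunE upd_same; lia.
Qed.

Lemma coef_top_off (l : idx n) :
  l t != 0 -> mulE (coef_d P t a) (coef_d Q t b) l = zeroS.
Proof.
move=> Hl; apply: mulE_eq0 => b' a' k i b1 a1.
have [Hk|Hk] := eqVneq (k t) 0; last by rewrite mul_termP0 // coef_d_off.
have [Hs|Hs] := eqVneq (shift l k i t) 0; last by rewrite mul_termQ0 // coef_d_off.
move: Hs; rewrite ffunE Hk => Hs.
by apply: (@mul_term_binom0 t); rewrite Hk //; lia.
Qed.

Lemma coef_top_term (l : idx n) b' a' (k : idx n) (i : mon n) (b1 : mon m)
    (a1 : mon n) : l t = 0 -> k t = 0 ->
  mul_term (coef_d P t a) (coef_d Q t b) l b' a' (k, i, b1, a1) =
  mul_term P Q (upd l t (a + b)) b' a' (upd k t a, i, b1, a1).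
Proof.
move=> Hl Hk; have [Hi|Hi] := eqVneq (i t) 0%N; last first.
  rewrite mul_termQ0; last by apply: coef_d_off; rewrite ffunE Hl Hk; lia.
  by rewrite mul_termQ0 // HQ // ffunE !upd_same; lia.
have Eshift : upd (shift l k i) t b = shift (upd l t (a + b)) (upd k t a) i.
  by apply/ffunP => j; rewrite !ffunE; case: eqP => [->|//]; rewrite Hi; lia.
rewrite /= coef_d_on // coef_d_on; last by rewrite ffunE Hl Hk Hi.
rewrite Eshift; case: ifP => // _; congr (_ * _ * _ * _).
by apply: eq_bigr => j _; rewrite ffunE; case: eqP => [->|//]; rewrite Hk Hi !gbinom0.
Qed.

(* Terms on the left whose d_t-exponent k_t differs from a vanish: either
   P_k = 0 (k_t > a) or the Q-factor has d_t-exponent above b (k_t < a). *)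
Lemma coef_top_outside (l : idx n) b' a' (k : idx n) (i : mon n) (b1 : mon m)
    (a1 : mon n) : ~ (exists k0 : idx n, k0 t = 0 /\ upd k0 t a = k) ->
  mul_term P Q (upd l t (a + b)) b' a' (k, i, b1, a1) = 0.
Proof.
move=> Hnot; have [Hk|Hk] := ltrP a (k t); first by rewrite mul_termP0 // HP.
have [Ek|Hk'] := eqVneq (k t) a.
  by exfalso; apply: Hnot; exists (upd k t 0); rewrite upd_same upd_upd -Ek upd_id.
by rewrite mul_termQ0 // HQ // ffunE upd_same; lia.
Qed.

Lemma coef_top_mulE :
  coef_d (mulE P Q) t (a + b) = mulE (coef_d P t a) (coef_d Q t b).
Proof.
apply/functional_extensionality_dep => l.
have [Hl|Hl] := eqVneq (l t) 0; last by rewrite coef_d_off // coef_top_off.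
rewrite coef_d_on //; apply/functional_extensionality_dep => b'.
apply/functional_extensionality_dep => a'; rewrite !mulEE; apply/esym.
apply: (@fsbig_reindex _ _ [set u : index4 m n | u.1.1.1 t = 0]
  (fun u => (upd u.1.1.1 t a, u.1.1.2, u.1.2, u.2))).
- move=> [[[k i] b1] a1] [[[k' i'] b1'] a1']; rewrite !in_setE /= => Hk Hk'.
  by case=> /(upd_inj (etrans Hk (esym Hk'))) -> -> -> ->.
- by move=> [[[k i] b1] a1] Hk; rewrite mul_termP0 // coef_d_off //; apply/eqP.
- move=> [[[k i] b1] a1] Hk; apply: coef_top_outside => -[k0 [Hk0 Ek]].
  by apply: Hk; exists (k0, i, b1, a1); rewrite //= Ek.
- by move=> [[[k i] b1] a1] Hk; apply: coef_top_term.
Qed.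

End TopCoefficient.

Definition involves_first (P : op K m n) (i : nat) : Prop :=
  forall l : idx n, (exists j : 'I_n, (i <= j)%N /\ l j != 0) -> P l = zeroS.

Lemma involves_first_all (P : op K m n) : involves_first P n.
Proof. by move=> l [j [Hj _]]; move: (ltn_ord j); rewrite ltnNge Hj. Qed.

Lemma involves_first_coef (P : op K m n) i t s :
  involves_first P i.+1 -> val t = i -> involves_first (coef_d P t s) i.
Proof.
move=> sP Ht l [j [Hj Hl]].
have [Hlt|Hlt] := eqVneq (l t) 0; last exact: coef_d_off.
rewrite coef_d_on //; apply: sP; exists j; rewrite ffunE.
have [Ejt|Hjt] := eqVneq j t; first by move: Hl; rewrite Ejt Hlt eqxx.
split => //; rewrite ltn_neqAle Hj andbT; apply: contra Hjt => /eqP Eij.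
by apply/eqP/val_inj; rewrite /= Ht.
Qed.

Lemma involves_none_neq0 (R : op K m n) : involves_first R 0 -> R <> zeroO ->
  exists b a, R [ffun=> 0] b a != 0.
Proof.
move=> sR nR; apply/not_existsP => H; apply: nR.
apply/functional_extensionality_dep => l.
have [->|Hl] := eqVneq l [ffun=> 0]; last first.
  by apply: sR; have [j Hj] := ffun_neq_const Hl; exists j.
apply/functional_extensionality_dep => b; apply/functional_extensionality_dep => a.
by apply/eqP/negPn/negP => Hb; apply: (H b); exists a.
Qed.

(* The product of two power series (operators involving no d) is computed
   at the sum of the lexicographically least monomials (b1, a1) of P and
   (b2, a2) of Q: only the term pairing these two monomials survives. *)
Section LeadingMonomials.
Variables (P Q : op K m n) (b1 : mon m) (a1 : mon n) (b2 : mon m) (a2 : mon n).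
Hypothesis sP : involves_first P 0.
Hypotheses (minP : forall b a, P [ffun=> 0] b a != 0 ->
                     lexle b1 b /\ (b1 = b -> lexle a1 a))
           (minQ : forall b a, Q [ffun=> 0] b a != 0 ->
                     lexle b2 b /\ (b2 = b -> lexle a2 a)).

Lemma shift0 : shift [ffun=> 0] [ffun=> 0] [ffun=> 0%N] = [ffun=> 0].
Proof. by apply/ffunP => j; rewrite !ffunE subrr. Qed.

Lemma lead_term_unique (k : idx n) (i : mon n) (b : mon m) (a : mon n) :
  (k, i, b, a) <> ([ffun=> 0], [ffun=> 0%N], b1, a1) ->
  mul_term P Q [ffun=> 0] [ffun j => (b1 j + b2 j)%N]
    [ffun j => (a1 j + a2 j)%N] (k, i, b, a) = 0.
Proof.
move=> Hne; have [Ek|Hk] := eqVneq k [ffun=> 0]; last first.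
  by rewrite mul_termP0 // sP //; have [j Hj] := ffun_neq_const Hk; exists j.
have [Ei|Hi] := eqVneq i [ffun=> 0%N]; last first.
  have [j Hj] := ffun_neq_const Hi.
  by apply: (@mul_term_binom0 j); rewrite Ek ffunE // ltz_nat lt0n.
subst k i; apply/eqP/negPn/negP => /mul_term_neq0 [/forallP Hb /forallP Ha].
set B := [ffun j => _] in Hb *; set A := [ffun j => _] in Ha *.
have -> : [ffun j => (A j - a j + [ffun=> 0%N] j)%N] = [ffun j => (A j - a j)%N].
  by apply/ffunP => j; rewrite !ffunE addn0.
rewrite shift0 => /minP [lb1 lb2] /minQ [lc1 lc2]; apply: Hne.
have [Eb Eb2] : b1 = b /\ b2 = [ffun j => (B j - b j)%N].
  by apply: lex_cancel lb1 lc1 _ => j; move: (Hb j); rewrite !ffunE => /subnKC.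
have [Ea _] : a1 = a /\ a2 = [ffun j => (A j - a j)%N].
  apply: lex_cancel (lb2 Eb) (lc2 Eb2) _ => j.
  by move: (Ha j); rewrite !ffunE => /subnKC.
by rewrite Eb Ea.
Qed.

Lemma lead_term :
  mulE P Q [ffun=> 0] [ffun j => (b1 j + b2 j)%N] [ffun j => (a1 j + a2 j)%N] =
  P [ffun=> 0] b1 a1 * Q [ffun=> 0] b2 a2.
Proof.
rewrite mulEE (fsbig_single (u0 := ([ffun=> 0], [ffun=> 0%N], b1, a1))); last first.
  by move=> [[[k i] b] a]; apply: lead_term_unique.
rewrite /= shift0 ifT; last first.
  by apply/andP; split; apply/forallP => j; rewrite ffunE leq_addr.
rewrite !big1 => [||j _]; last by rewrite !ffunE gbinom0.
- rewrite !mulr1; congr (_ * Q _ _ _); apply/ffunP => j; rewrite !ffunE ?addn0 addKn //.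
- by move=> j _; rewrite !ffunE ffactn0.
Qed.

End LeadingMonomials.

Lemma mulE_neq0 (P Q : op K m n) : involves_first P 0 -> involves_first Q 0 ->
  P <> zeroO -> Q <> zeroO -> mulE P Q <> zeroO.
Proof.
move=> sP sQ nP nQ.
have [b1 [a1 [HP1 minP]]] := lex2_min (involves_none_neq0 sP nP).
have [b2 [a2 [HQ2 minQ]]] := lex2_min (involves_none_neq0 sQ nQ).
move=> /(congr1 (fun R => R [ffun=> 0] [ffun j => (b1 j + b2 j)%N]
                                    [ffun j => (a1 j + a2 j)%N])).
by rewrite lead_term //; apply/eqP; apply: mulf_neq0.
Qed.

Lemma hasOrdG_mulE i (P Q : op K m n) k1 k2 :
  involves_first P i -> involves_first Q i ->
  hasOrdG i P k1 -> hasOrdG i Q k2 -> hasOrdG i (mulE P Q) (idx_add k1 k2).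
Proof.
elim: i P Q => [|i IH] P Q sP sQ hP hQ /=; first exact: mulE_neq0.
move=> t Ht; have [hP1 hP2] := hP t Ht; have [hQ1 hQ2] := hQ t Ht.
have bP := vanish_above hP1; have bQ := vanish_above hQ1.
rewrite ffunE coef_top_mulE //; split; first exact: mulE_vanish_above.
by apply: IH => //; apply: involves_first_coef.
Qed.

End Product.

Theorem mainTheorem2 (K : fieldType) (hK : [pchar K] =i pred0) (m n : nat)
    (hn : (0 < n)%N) (P1 P2 : op K m n) :
  A1 P1 -> A1 P2 ->
  A1 (mulE P1 P2) /\
  (forall k1 k2 : idx n, ordG P1 k1 -> ordG P2 k2 ->
     ordG (mulE P1 P2) (idx_add k1 k2)).
Proof.
move=> [k1' [hk1 oP1]] [k2' [hk2 oP2]].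
have ordG_mul k1 k2 : ordG P1 k1 -> ordG P2 k2 -> ordG (mulE P1 P2) (idx_add k1 k2).
  move=> [i1 h1] [i2 h2]; split; first exact: inE_mulE i1 i2 oP1 oP2.
  by apply: hasOrdG_mulE => //; apply: involves_first_all.
split; last exact: ordG_mul.
exists (idx_add k1' k2'); split; first by apply: ordG_mul.
by rewrite idx_abs_add; apply: ord_mulE.
Qed.
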